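(* Let $P \subseteq \mathbb{R}^7$ be an associative $3$-plane. Then the orthogonal direct sum $\Theta(P) = \Lambda^2(P) \oplus \Psi(P)$ is a Lie subalgebra of $\Lambda^2(\mathbb{R}^7) = \mathfrak{so}(7)$ isomorphic to $\mathfrak{so}(4)$.
   Context: Equip $\mathbb{R}^7$ with its standard inner product, orientation and basis. Let $\varphi = e_{123} - e_{167} - e_{527} - e_{563} - e_{415} - e_{426} - e_{437}$ ($e_{ijk} = e_i\wedge e_j\wedge e_k$), $\psi = \star\varphi = e_{4567} - e_{4523} - e_{4163} - e_{4127} - e_{2637} - e_{1537} - e_{1526}$, and define $\times$ by $\langle u \times v, w \rangle = \varphi(u,v,w)$. A $3$-dimensional subspace is associative if closed under $\times$. For $u,v$: $u\wedge v$ is the 2-form $(a,b)\mapsto \langle u,a\rangle\langle v,b\rangle - \langle u,b\rangle\langle v,a\rangle$, and $\Psi_{uv}$ is the 2-form $(a,b)\mapsto\psi(u,v,a,b)$. $\Lambda^2(P) = \mathrm{Span}\{u\wedge v: u,v\in P\}$, $\Psi(P) = \mathrm{Span}\{\Psi_{uv} : u,v\in P\}$. Skew bilinear forms are identified with skew-adjoint operators via $X(a,b) = \langle X(a),b\rangle$, the bracket is the commutator, and the inner product on $\Lambda^2$ is $\langle X,Y\rangle = \sum_{i,j} X(e_i,e_j)Y(e_i,e_j)$. *)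

(* Vectors of R^7 are row vectors 'rV[R]_7; the standard
   basis vector e_i (1-based index i in the paper) is  ev (ix i).
   Skew bilinear forms X on R^7 are stored as 7x7 matrices of their values
   X(e_a, e_b).  Subspaces of R^7 are row spaces of matrices (mxalgebra). *)
From HB Require Import structures.
From mathcomp Require Import all_boot all_order all_algebra.
From mathcomp Require Import all_classical all_reals.
Set Implicit Arguments.
Unset Strict Implicit.
Unset Printing Implicit Defensive.
Import Order.TTheory GRing.Theory Num.Theory.
Local Open Scope ring_scope.

Section G2.
Variable R : realType.

Definition ix (n : nat) : 'I_7 := inord n.-1.

Definition ev (a : 'I_7) : 'rV[R]_7 := delta_mx 0 a.

Definition ip (u v : 'rV[R]_7) : R := \sum_(k < 7) u 0 k * v 0 k.

(* e_{ijk} = e_i /\ e_j /\ e_k evaluated on (u,v,w) *)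
Definition e3 (i j k : nat) (u v w : 'rV[R]_7) : R :=
  \det (\matrix_(a < 3, b < 3)
          (tnth [tuple u; v; w] a) 0 (tnth [tuple ix i; ix j; ix k] b)).

Definition e4 (i j k l : nat) (u v w x : 'rV[R]_7) : R :=
  \det (\matrix_(a < 4, b < 4)
          (tnth [tuple u; v; w; x] a) 0 (tnth [tuple ix i; ix j; ix k; ix l] b)).

Definition phi (u v w : 'rV[R]_7) : R :=
  e3 1 2 3 u v w - e3 1 6 7 u v w - e3 5 2 7 u v w - e3 5 6 3 u v w
  - e3 4 1 5 u v w - e3 4 2 6 u v w - e3 4 3 7 u v w.

Definition psi (u v w x : 'rV[R]_7) : R :=
  e4 4 5 6 7 u v w x - e4 4 5 2 3 u v w x - e4 4 1 6 3 u v w x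
  - e4 4 1 2 7 u v w x - e4 2 6 3 7 u v w x - e4 1 5 3 7 u v w x
  - e4 1 5 2 6 u v w x.

(* cross product: <u x v, w> = phi(u,v,w); its k-th coordinate is phi(u,v,e_k) *)
Definition cross (u v : 'rV[R]_7) : 'rV[R]_7 := \row_k phi u v (ev k).

Definition associative_plane (P : 'M[R]_7) : Prop :=
  \rank P = 3%N /\
  forall u v : 'rV[R]_7, (u <= P)%MS -> (v <= P)%MS -> (cross u v <= P)%MS.

Definition wedge (u v : 'rV[R]_7) : 'M[R]_7 :=
  \matrix_(a, b) (ip u (ev a) * ip v (ev b) - ip u (ev b) * ip v (ev a)).

Definition PsiF (u v : 'rV[R]_7) : 'M[R]_7 :=
  \matrix_(a, b) psi u v (ev a) (ev b).

Definition in_span2 (F : 'rV[R]_7 -> 'rV[R]_7 -> 'M[R]_7) (P : 'M[R]_7)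
  (X : 'M[R]_7) : Prop :=
  exists (n : nat) (c : 'I_n -> R) (u v : 'I_n -> 'rV[R]_7),
    (forall i, (u i <= P)%MS) /\ (forall i, (v i <= P)%MS) /\
    X = \sum_(i < n) c i *: F (u i) (v i).

Definition Lambda2 (P : 'M[R]_7) (X : 'M[R]_7) : Prop := in_span2 wedge P X.
Definition PsiSp (P : 'M[R]_7) (X : 'M[R]_7) : Prop := in_span2 PsiF P X.

Definition Theta (P : 'M[R]_7) (X : 'M[R]_7) : Prop :=
  exists A B, Lambda2 P A /\ PsiSp P B /\ X = A + B.

Definition ip2 (X Y : 'M[R]_7) : R := \sum_(i < 7) \sum_(j < 7) X i j * Y i j.

(* skew-adjoint operator associated to a form: X(a,b) = <X(a), b>.
   Column convention: (A a)_j = sum_i A j i a_i, so <A a, b> =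
   sum_{i,j} a_i X i j b_j  forces A = X^T. *)
Definition op_of (X : 'M[R]_7) : 'M[R]_7 := X^T.
Definition form_of (A : 'M[R]_7) : 'M[R]_7 := A^T.

Definition lie2 (X Y : 'M[R]_7) : 'M[R]_7 :=
  form_of (op_of X *m op_of Y - op_of Y *m op_of X).

Definition so4 (A : 'M[R]_4) : Prop := A^T = - A.
Definition lie4 (A B : 'M[R]_4) : 'M[R]_4 := A *m B - B *m A.

End G2.

(* Choose an orthonormal frame p1, p2, p3 = p1 x p2 of the associative plane P and
   write Phi_w = phi(w, ., .).  The G2 identity Psi_uv = u /\ v - Phi_(u x v) shows that
   Lambda^2(P) has basis W_i = p_j /\ p_k and Psi(P) has basis Q_i = Phi_(p_i) - W_i,
   for (i, j, k) cyclic.  The bracket identities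
     [Phi_u, Phi_v] = 3 u /\ v - 2 Phi_(u x v),
     [u /\ v, Phi_w] = v /\ (w x u) - u /\ (w x v)
   then give [W_i, W_j] = W_k, [Q_i, Q_j] = -2 Q_k and [W_i, Q_j] = 0: Theta(P) is the sum
   of two commuting copies of so(3), and so(4) has a basis (left and right quaternion
   multiplications) with the same structure constants.  The W_i and Q_i are pairwise
   orthogonal, which gives the orthogonality of the sum and the coordinates of the
   isomorphism. *)

From HB Require Import structures.
From mathcomp Require Import all_boot all_order all_algebra.
From mathcomp Require Import all_classical all_reals.
From mathcomp Require Import ring lra.
Import Order.TTheory GRing.Theory Num.Theory.
Local Open Scope ring_scope.
Set Implicit Arguments.
Unset Strict Implicit.

Section InnerProduct.
Variable R : realType.
Implicit Types u v w : 'rV[R]_7.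

Lemma ipC u v : ip u v = ip v u.
Proof. by apply: eq_bigr => k _; rewrite mulrC. Qed.

Lemma ipDl u v w : ip (u + v) w = ip u w + ip v w.
Proof. by rewrite /ip -big_split; apply: eq_bigr => k _; rewrite mxE mulrDl. Qed.

Lemma ipZl (a : R) u v : ip (a *: u) v = a * ip u v.
Proof. by rewrite /ip mulr_sumr; apply: eq_bigr => k _; rewrite mxE mulrA. Qed.

Lemma ipNl u v : ip (- u) v = - ip u v.
Proof. by rewrite -scaleN1r ipZl mulN1r. Qed.

Lemma ip0l v : ip 0 v = 0.
Proof. by rewrite -(scale0r 0) ipZl mul0r. Qed.

Lemma ipDr u v w : ip w (u + v) = ip w u + ip w v.
Proof. by rewrite ipC ipDl !(ipC w). Qed.

Lemma ipZr (a : R) u v : ip v (a *: u) = a * ip v u.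
Proof. by rewrite ipC ipZl ipC. Qed.

Lemma ipNr u v : ip v (- u) = - ip v u.
Proof. by rewrite ipC ipNl ipC. Qed.

Lemma ip0r v : ip v 0 = 0.
Proof. by rewrite ipC ip0l. Qed.

Lemma ip_ev u a : ip u (ev R a) = u 0 a.
Proof.
rewrite /ip (bigD1 a) //= big1 => [|k k_neq_a]; first by rewrite mxE !eqxx mulr1 addr0.
by rewrite mxE eqxx (negPf k_neq_a) mulr0.
Qed.

Lemma ip_ge0 u : 0 <= ip u u.
Proof. by apply: sumr_ge0 => k _; rewrite -expr2 sqr_ge0. Qed.

Lemma ip_eq0 u : (ip u u == 0) = (u == 0).
Proof.
apply/eqP/eqP => [uu0|->]; last by rewrite ip0l.
apply/rowP => k; apply/eqP; rewrite mxE -sqrf_eq0 expr2.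
by apply/eqP/(psumr_eq0P _ uu0) => // i _; rewrite -expr2 sqr_ge0.
Qed.

End InnerProduct.

Section Coordinates.
Variable R : realType.
Implicit Types u v w x : 'rV[R]_7.

Lemma ix_val n : (0 < n <= 7)%N -> ix n = n.-1 :> nat.
Proof. by case: n => // n /andP[_ n_lt7]; rewrite inordK. Qed.

Lemma ev_ix n m : (0 < n <= 7)%N -> (0 < m <= 7)%N ->
  ev R (ix n) 0 (ix m) = (n == m)%:R.
Proof.
move=> n_in m_in; rewrite mxE eqxx eq_sym -(inj_eq val_inj) /= !ix_val //.
by case: n n_in => // n _; case: m m_in.
Qed.

Lemma e3E i j k u v w : e3 i j k u v w =
  u 0 (ix i) * (v 0 (ix j) * w 0 (ix k) - v 0 (ix k) * w 0 (ix j))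
  - u 0 (ix j) * (v 0 (ix i) * w 0 (ix k) - v 0 (ix k) * w 0 (ix i))
  + u 0 (ix k) * (v 0 (ix i) * w 0 (ix j) - v 0 (ix j) * w 0 (ix i)).
Proof.
rewrite /e3 (expand_det_row _ 0) !big_ord_recr big_ord0 /= /cofactor.
rewrite !(expand_det_row _ 0) !big_ord_recr !big_ord0 /= /cofactor !det_mx11 !mxE /=.
ring.
Qed.

Lemma e4E i j k l u v w x : e4 i j k l u v w x =
  u 0 (ix i) * e3 j k l v w x - u 0 (ix j) * e3 i k l v w x
  + u 0 (ix k) * e3 i j l v w x - u 0 (ix l) * e3 i j k v w x.
Proof.
rewrite /e4 (expand_det_row _ 0) !big_ord_recr big_ord0 /cofactor /e3.
have laplace_signs (a0 a1 a2 a3 d0 d1 d2 d3 : R) :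
  0 + a0 * ((-1) ^+ (0 + 0) * d0) + a1 * ((-1) ^+ (0 + 1) * d1)
  + a2 * ((-1) ^+ (0 + 2) * d2) + a3 * ((-1) ^+ (0 + 3) * d3)
  = a0 * d0 - a1 * d1 + a2 * d2 - a3 * d3 by ring.
apply: etrans (laplace_signs _ _ _ _ _ _ _ _) _.
by congr (_ - _ + _ - _); rewrite mxE; congr (_ * \det _); apply/matrixP => a b;
  rewrite !mxE; case: a => [[|[|[|?]]] ?]; case: b => [[|[|[|?]]] ?].
Qed.

Lemma ipE u v : ip u v = u 0 (ix 1) * v 0 (ix 1) + u 0 (ix 2) * v 0 (ix 2) +
  u 0 (ix 3) * v 0 (ix 3) + u 0 (ix 4) * v 0 (ix 4) + u 0 (ix 5) * v 0 (ix 5) +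
  u 0 (ix 6) * v 0 (ix 6) + u 0 (ix 7) * v 0 (ix 7).
Proof.
rewrite /ip (eq_bigr (fun k : 'I_7 => u 0 (ix k.+1) * v 0 (ix k.+1))) => [|k _].
  by rewrite !big_ord_recr big_ord0 /= add0r.
by rewrite /ix /= inord_val.
Qed.

(* A product of seven equations, so that [rewrite crossE] expands every coordinate. *)
Lemma crossE u v :
  (cross u v 0 (ix 1) = u 0 (ix 2) * v 0 (ix 3) - u 0 (ix 3) * v 0 (ix 2)
     - (u 0 (ix 6) * v 0 (ix 7) - u 0 (ix 7) * v 0 (ix 6))
     + (u 0 (ix 4) * v 0 (ix 5) - u 0 (ix 5) * v 0 (ix 4))) *
  (cross u v 0 (ix 2) = u 0 (ix 3) * v 0 (ix 1) - u 0 (ix 1) * v 0 (ix 3)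
     + (u 0 (ix 5) * v 0 (ix 7) - u 0 (ix 7) * v 0 (ix 5))
     + (u 0 (ix 4) * v 0 (ix 6) - u 0 (ix 6) * v 0 (ix 4))) *
  (cross u v 0 (ix 3) = u 0 (ix 1) * v 0 (ix 2) - u 0 (ix 2) * v 0 (ix 1)
     - (u 0 (ix 5) * v 0 (ix 6) - u 0 (ix 6) * v 0 (ix 5))
     + (u 0 (ix 4) * v 0 (ix 7) - u 0 (ix 7) * v 0 (ix 4))) *
  (cross u v 0 (ix 4) = u 0 (ix 5) * v 0 (ix 1) - u 0 (ix 1) * v 0 (ix 5)
     + (u 0 (ix 6) * v 0 (ix 2) - u 0 (ix 2) * v 0 (ix 6))
     + (u 0 (ix 7) * v 0 (ix 3) - u 0 (ix 3) * v 0 (ix 7))) *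
  (cross u v 0 (ix 5) = u 0 (ix 7) * v 0 (ix 2) - u 0 (ix 2) * v 0 (ix 7)
     + (u 0 (ix 3) * v 0 (ix 6) - u 0 (ix 6) * v 0 (ix 3))
     + (u 0 (ix 1) * v 0 (ix 4) - u 0 (ix 4) * v 0 (ix 1))) *
  (cross u v 0 (ix 6) = u 0 (ix 1) * v 0 (ix 7) - u 0 (ix 7) * v 0 (ix 1)
     + (u 0 (ix 5) * v 0 (ix 3) - u 0 (ix 3) * v 0 (ix 5))
     + (u 0 (ix 2) * v 0 (ix 4) - u 0 (ix 4) * v 0 (ix 2))) *
  (cross u v 0 (ix 7) = u 0 (ix 6) * v 0 (ix 1) - u 0 (ix 1) * v 0 (ix 6)
     + (u 0 (ix 2) * v 0 (ix 5) - u 0 (ix 5) * v 0 (ix 2))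
     + (u 0 (ix 3) * v 0 (ix 4) - u 0 (ix 4) * v 0 (ix 3))).
Proof. by do !split; rewrite mxE /phi !e3E !ev_ix //=; ring. Qed.

End Coordinates.

Ltac coords := unfold phi; rewrite ?e3E ?ipE ?crossE.

Section G2Identities.
Variable R : realType.
Implicit Types u v w x : 'rV[R]_7.

Lemma phi_ip u v w : phi u v w = ip (cross u v) w.
Proof. by coords; ring. Qed.

Lemma phiC u v w : phi v u w = - phi u v w.
Proof. by coords; ring. Qed.

Lemma phi_swap23 u v w : phi u w v = - phi u v w.
Proof. by coords; ring. Qed.

Lemma phiDl u v w x : phi (u + v) w x = phi u w x + phi v w x.
Proof. by rewrite /phi !e3E !mxE; ring. Qed.

Lemma phiZl (a : R) u w x : phi (a *: u) w x = a * phi u w x.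
Proof. by rewrite /phi !e3E !mxE; ring. Qed.

Lemma psiE u v w x :
  psi u v w x = ip u w * ip v x - ip u x * ip v w - phi (cross u v) w x.
Proof. by rewrite /psi !e4E; coords; ring. Qed.

Lemma crossC u v : cross v u = - cross u v.
Proof. by apply/rowP => k; rewrite !mxE phiC. Qed.

Lemma crossDl u v w : cross (u + v) w = cross u w + cross v w.
Proof. by apply/rowP => k; rewrite !mxE phiDl. Qed.

Lemma crossZl (a : R) u w : cross (a *: u) w = a *: cross u w.
Proof. by apply/rowP => k; rewrite !mxE phiZl. Qed.

Lemma crossZr (a : R) u w : cross w (a *: u) = a *: cross w u.
Proof. by rewrite crossC crossZl -scalerN -crossC. Qed.

Lemma crossNr u w : cross w (- u) = - cross w u.
Proof. by rewrite -scaleN1r crossZr scaleN1r. Qed.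

Lemma crossvv u : cross u u = 0.
Proof. by apply/rowP => k; rewrite !mxE; coords; ring. Qed.

Lemma ip_crossr u v : ip (cross u v) v = 0.
Proof. by coords; ring. Qed.

Lemma ip_cross_cross u v w :
  ip (cross u w) (cross v w) = ip u v * ip w w - ip u w * ip v w.
Proof. by coords; ring. Qed.

Lemma cross_cross u w : cross u (cross u w) = ip u w *: u - ip u u *: w.
Proof.
apply/rowP => k; rewrite [LHS]mxE !mxE -!(ip_ev _ k).
by coords; ring.
Qed.

Lemma cross_orthonormal u v : ip u u = 1 -> ip v v = 1 -> ip u v = 0 ->
  [/\ ip (cross u v) (cross u v) = 1, ip u (cross u v) = 0 & ip v (cross u v) = 0].
Proof.
move=> uu1 vv1 uv0; split; last 2 first.
- by rewrite ipC -phi_ip phiC phi_ip ip_crossr oppr0.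
- by rewrite ipC ip_crossr.
by rewrite ip_cross_cross uu1 vv1 uv0; ring.
Qed.

End G2Identities.

Section TwoForms.
Variable R : realType.
Implicit Types u v w z : 'rV[R]_7.
Implicit Types X Y Z : 'M[R]_7.

Definition Phi w : 'M[R]_7 := \matrix_(a, b) phi w (ev R a) (ev R b).

Lemma PhiD u v : Phi (u + v) = Phi u + Phi v.
Proof. by apply/matrixP => a b; rewrite !mxE phiDl. Qed.

Lemma PhiZ (c : R) u : Phi (c *: u) = c *: Phi u.
Proof. by apply/matrixP => a b; rewrite !mxE phiZl. Qed.

Lemma PhiN u : Phi (- u) = - Phi u.
Proof. by rewrite -scaleN1r PhiZ scaleN1r. Qed.

Lemma Phi0 : Phi 0 = 0.
Proof. by rewrite -(scale0r 0) PhiZ scale0r. Qed.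

Lemma PsiF_wedge_Phi u v : PsiF u v = wedge u v - Phi (cross u v).
Proof. by apply/matrixP => a b; rewrite !mxE psiE !ip_ev. Qed.

Lemma row_Phi w r : row r (Phi w) = cross w (ev R r).
Proof. by apply/rowP => k; rewrite !mxE. Qed.

Lemma colT_Phi w s : (col s (Phi w))^T = - cross w (ev R s).
Proof. by apply/rowP => k; rewrite !mxE phi_swap23. Qed.

Lemma row_wedge u v r : row r (wedge u v) = ip u (ev R r) *: v - ip v (ev R r) *: u.
Proof. by apply/rowP => k; rewrite !mxE !ip_ev; ring. Qed.

Lemma colT_wedge u v s : (col s (wedge u v))^T = ip v (ev R s) *: u - ip u (ev R s) *: v.
Proof. by apply/rowP => k; rewrite !mxE !ip_ev; ring. Qed.

Lemma lie2E X Y : lie2 X Y = Y *m X - X *m Y.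
Proof. by rewrite /lie2 /form_of /op_of linearB /= !trmx_mul !trmxK. Qed.

Lemma lie2_entry X Y r s :
  lie2 X Y r s = ip (row r Y) (col s X)^T - ip (row r X) (col s Y)^T.
Proof.
by rewrite lie2E mxE !mxE; congr (_ - _); apply: eq_bigr => k _; rewrite !mxE.
Qed.

Lemma lie2C X Y : lie2 Y X = - lie2 X Y.
Proof. by rewrite !lie2E opprB. Qed.

Lemma lie2xx X : lie2 X X = 0.
Proof. by rewrite lie2E subrr. Qed.

Lemma lie2Dl X Y Z : lie2 (X + Y) Z = lie2 X Z + lie2 Y Z.
Proof. by rewrite !lie2E mulmxDl mulmxDr addrACA opprD. Qed.

Lemma lie2Zl a X Y : lie2 (a *: X) Y = a *: lie2 X Y.
Proof. by rewrite !lie2E -scalemxAl -scalemxAr scalerBr. Qed.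

Lemma lie2Bl X Y Z : lie2 (X - Y) Z = lie2 X Z - lie2 Y Z.
Proof. by rewrite -scaleN1r lie2Dl lie2Zl scaleN1r. Qed.

Lemma lie2Dr X Y Z : lie2 Z (X + Y) = lie2 Z X + lie2 Z Y.
Proof. by rewrite lie2C lie2Dl opprD -!lie2C. Qed.

Lemma lie2Zr a X Y : lie2 Y (a *: X) = a *: lie2 Y X.
Proof. by rewrite lie2C lie2Zl -scalerN -lie2C. Qed.

Lemma lie2Br X Y Z : lie2 Z (X - Y) = lie2 Z X - lie2 Z Y.
Proof. by rewrite lie2C lie2Bl opprB -!lie2C addrC. Qed.

Ltac entrywise := apply/matrixP => r s; rewrite lie2_entry ?row_Phi ?colT_Phi
  ?row_wedge ?colT_wedge !mxE ?ipDl ?ipDr ?ipNl ?ipNr ?ipZl ?ipZr; coords; ring.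

Lemma lie2_Phi_Phi u v : lie2 (Phi u) (Phi v) = 3 *: wedge u v - 2 *: Phi (cross u v).
Proof. entrywise. Qed.

Lemma lie2_wedge_Phi u v z :
  lie2 (wedge u v) (Phi z) = wedge v (cross z u) - wedge u (cross z v).
Proof. entrywise. Qed.

Lemma lie2_wedge_wedge u v w z : lie2 (wedge u v) (wedge w z) =
  ip v z *: wedge u w - ip v w *: wedge u z + ip u w *: wedge v z - ip u z *: wedge v w.
Proof. entrywise. Qed.

Lemma ip2C X Y : ip2 X Y = ip2 Y X.
Proof. by apply: eq_bigr => i _; apply: eq_bigr => j _; rewrite mulrC. Qed.

Lemma ip2Dl X Y Z : ip2 (X + Y) Z = ip2 X Z + ip2 Y Z.
Proof.
rewrite /ip2 -big_split; apply: eq_bigr => i _; rewrite -big_split.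
by apply: eq_bigr => j _; rewrite mxE mulrDl.
Qed.

Lemma ip2Zl a X Y : ip2 (a *: X) Y = a * ip2 X Y.
Proof.
rewrite /ip2 mulr_sumr; apply: eq_bigr => i _; rewrite mulr_sumr.
by apply: eq_bigr => j _; rewrite mxE mulrA.
Qed.

Lemma ip2Nl X Y : ip2 (- X) Y = - ip2 X Y.
Proof. by rewrite -scaleN1r ip2Zl mulN1r. Qed.

Lemma ip2Dr X Y Z : ip2 Z (X + Y) = ip2 Z X + ip2 Z Y.
Proof. by rewrite ip2C ip2Dl !(ip2C Z). Qed.

Lemma ip2Zr a X Y : ip2 Y (a *: X) = a * ip2 Y X.
Proof. by rewrite ip2C ip2Zl ip2C. Qed.

Lemma ip2Nr X Y : ip2 Y (- X) = - ip2 Y X.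
Proof. by rewrite ip2C ip2Nl ip2C. Qed.

Lemma ip2E X Y : ip2 X Y = \sum_(r < 7) ip (row r X) (row r Y).
Proof. by apply: eq_bigr => r _; apply: eq_bigr => k _; rewrite !mxE. Qed.

Lemma ip2_Phi_Phi u v : ip2 (Phi u) (Phi v) = 6 * ip u v.
Proof.
rewrite ip2E (eq_bigr (fun r => ip u v - u 0 r * v 0 r)) => [|r _].
  by rewrite sumrB sumr_const card_ord -/(ip u v) -mulr_natl; ring.
by rewrite !row_Phi ip_cross_cross !ip_ev mxE !eqxx mulr1.
Qed.

Lemma ip2_wedge_Phi u v w : ip2 (wedge u v) (Phi w) = 2 * phi w u v.
Proof.
rewrite ip2E (eq_bigr (fun r => v 0 r * cross w u 0 r - u 0 r * cross w v 0 r)) => [|r _].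
  by rewrite sumrB -/(ip v (cross w u)) -/(ip u (cross w v)); coords; ring.
by rewrite row_wedge row_Phi -!(ip_ev _ r) ipDl ipNl !ipZl; coords; ring.
Qed.

Lemma ip2_wedge_wedge u v w z :
  ip2 (wedge u v) (wedge w z) = 2 * (ip u w * ip v z - ip u z * ip v w).
Proof.
rewrite ip2E (eq_bigr (fun r => ip v z * (u 0 r * w 0 r) - ip v w * (u 0 r * z 0 r)
   - (ip u z * (v 0 r * w 0 r) - ip u w * (v 0 r * z 0 r)))) => [|r _].
  by rewrite !sumrB -!mulr_sumr -/(ip u w) -/(ip u z) -/(ip v w) -/(ip v z); ring.
by rewrite !row_wedge !ipDl !ipDr !ipNl !ipNr !ipZl !ipZr !ip_ev; ring.
Qed.

End TwoForms.

Section Combinations.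
Variables (R : pzRingType) (V : lmodType R).
Implicit Types x : V.

Definition comb3 x1 x2 x3 (a1 a2 a3 : R) : V := a1 *: x1 + a2 *: x2 + a3 *: x3.

Definition span3 x1 x2 x3 (X : V) := exists a1 a2 a3, X = comb3 x1 x2 x3 a1 a2 a3.

Lemma comb3D x1 x2 x3 a1 a2 a3 b1 b2 b3 :
  comb3 x1 x2 x3 a1 a2 a3 + comb3 x1 x2 x3 b1 b2 b3 =
  comb3 x1 x2 x3 (a1 + b1) (a2 + b2) (a3 + b3).
Proof. by rewrite /comb3 !scalerDl addrACA [X in X + _]addrACA. Qed.

Lemma comb3Z x1 x2 x3 c a1 a2 a3 :
  c *: comb3 x1 x2 x3 a1 a2 a3 = comb3 x1 x2 x3 (c * a1) (c * a2) (c * a3).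
Proof. by rewrite /comb3 !scalerDr !scalerA. Qed.

Lemma comb3_0 x1 x2 x3 : comb3 x1 x2 x3 0 0 0 = 0.
Proof. by rewrite /comb3 !scale0r !addr0. Qed.

End Combinations.

Section BracketCombinations.
Variables (R : comPzRingType) (m n : nat) (br : 'M[R]_(m, n) -> 'M[R]_(m, n) -> 'M[R]_(m, n)).
Hypotheses (brDl : forall x y z, br (x + y) z = br x z + br y z)
  (brZl : forall a x y, br (a *: x) y = a *: br x y)
  (brC : forall x y, br y x = - br x y) (brxx : forall x, br x x = 0).

Lemma bracket_comb3 x1 x2 x3 y1 y2 y3 a1 a2 a3 c1 c2 c3 :
  br x1 x2 = y3 -> br x2 x3 = y1 -> br x3 x1 = y2 ->
  br (comb3 x1 x2 x3 a1 a2 a3) (comb3 x1 x2 x3 c1 c2 c3) =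
  comb3 y1 y2 y3 (a2 * c3 - a3 * c2) (a3 * c1 - a1 * c3) (a1 * c2 - a2 * c1).
Proof.
have brDr x y z : br z (x + y) = br z x + br z y by rewrite brC brDl opprD -!brC.
have brZr a x y : br y (a *: x) = a *: br y x by rewrite brC brZl -scalerN -brC.
move=> x12 x23 x31; rewrite /comb3 !brDl !brDr !brZl !brZr !brxx.
rewrite (brC x1 x2) (brC x2 x3) (brC x3 x1) x12 x23 x31.
by apply/matrixP => i j; rewrite !mxE; ring.
Qed.

End BracketCombinations.

Section SO4.
Variable R : realType.

Definition mx4 (rows : seq (seq R)) : 'M[R]_4 := \matrix_(i, j) nth 0 (nth [::] rows i) j.

(* [2 *: qL_n] and [qR_n] are the matrices of left and right multiplication by
   the quaternion units i, j, k on H = R^4 with basis 1, i, j, k. *)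
Definition qL1 := mx4 [:: [:: 0; -(1/2); 0; 0]; [:: 1/2; 0; 0; 0];
                          [:: 0; 0; 0; -(1/2)]; [:: 0; 0; 1/2; 0]].
Definition qL2 := mx4 [:: [:: 0; 0; -(1/2); 0]; [:: 0; 0; 0; 1/2];
                          [:: 1/2; 0; 0; 0]; [:: 0; -(1/2); 0; 0]].
Definition qL3 := mx4 [:: [:: 0; 0; 0; -(1/2)]; [:: 0; 0; -(1/2); 0];
                          [:: 0; 1/2; 0; 0]; [:: 1/2; 0; 0; 0]].
Definition qR1 := mx4 [:: [:: 0; -1; 0; 0]; [:: 1; 0; 0; 0]; [:: 0; 0; 0; 1]; [:: 0; 0; -1; 0]].
Definition qR2 := mx4 [:: [:: 0; 0; -1; 0]; [:: 0; 0; 0; -1]; [:: 1; 0; 0; 0]; [:: 0; 1; 0; 0]].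
Definition qR3 := mx4 [:: [:: 0; 0; 0; -1]; [:: 0; 0; 1; 0]; [:: 0; -1; 0; 0]; [:: 1; 0; 0; 0]].

Definition so4_of (a1 a2 a3 b1 b2 b3 : R) : 'M[R]_4 :=
  comb3 qL1 qL2 qL3 a1 a2 a3 + comb3 qR1 qR2 qR3 b1 b2 b3.

Lemma so4_of_skew a1 a2 a3 b1 b2 b3 : so4 (so4_of a1 a2 a3 b1 b2 b3).
Proof.
apply/matrixP => i j; rewrite !mxE.
by case: i => [[|[|[|[|?]]]] ?] //; case: j => [[|[|[|[|?]]]] ?] //=; ring.
Qed.

Lemma lie4_so4_of a1 a2 a3 b1 b2 b3 c1 c2 c3 d1 d2 d3 :
  lie4 (so4_of a1 a2 a3 b1 b2 b3) (so4_of c1 c2 c3 d1 d2 d3) =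
  so4_of (a2 * c3 - a3 * c2) (a3 * c1 - a1 * c3) (a1 * c2 - a2 * c1)
     (-2 * (b2 * d3 - b3 * d2)) (-2 * (b3 * d1 - b1 * d3)) (-2 * (b1 * d2 - b2 * d1)).
Proof.
apply/matrixP => i j; rewrite /so4_of /comb3 !mxE !big_ord_recr !big_ord0 /= !mxE /=.
by case: i => [[|[|[|[|?]]]] ?] //; case: j => [[|[|[|[|?]]]] ?] //=; field.
Qed.

Lemma so4_of_inj a1 a2 a3 b1 b2 b3 c1 c2 c3 d1 d2 d3 :
  so4_of a1 a2 a3 b1 b2 b3 = so4_of c1 c2 c3 d1 d2 d3 ->
  (a1, a2, a3, b1, b2, b3) = (c1, c2, c3, d1, d2, d3).
Proof.
move=> eq_so4; have entry i j := congr1 (fun A : 'M[R]_4 => A (inord i) (inord j)) eq_so4.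
move: (entry 0 1) (entry 2 3) (entry 0 2) (entry 1 3) (entry 0 3) (entry 1 2).
by rewrite !mxE !inordK //= => ? ? ? ? ? ?; congr (_, _, _, _, _, _); lra.
Qed.

Lemma so4_of_surj A : so4 A -> exists a1 a2 a3 b1 b2 b3, A = so4_of a1 a2 a3 b1 b2 b3.
Proof.
move=> skewA; pose a i j := A (inord i) (inord j).
have skew i j : a j i = - a i j.
  by have := congr1 (fun M : 'M[R]_4 => M (inord i) (inord j)) skewA; rewrite !mxE.
exists (- (a 0%N 1%N + a 2%N 3%N)), (a 1%N 3%N - a 0%N 2%N), (- (a 0%N 3%N + a 1%N 2%N)).
exists ((a 2%N 3%N - a 0%N 1%N) / 2), (- (a 0%N 2%N + a 1%N 3%N) / 2),
  ((a 1%N 2%N - a 0%N 3%N) / 2).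
apply/matrixP => i j; rewrite /so4_of /comb3 !mxE.
have ordE n (n_lt4 : (n < 4)%N) : Ordinal n_lt4 = inord n by apply: val_inj; rewrite /= inordK.
move: (skew 0 0) (skew 1 1) (skew 2 2) (skew 3 3) (skew 0 1) (skew 0 2) (skew 0 3)
  (skew 1 2) (skew 1 3) (skew 2 3); rewrite /a.
by case: i => [[|[|[|[|?]]]] ?] //; case: j => [[|[|[|[|?]]]] ?] //=; rewrite !ordE => *; lra.
Qed.

End SO4.

Section Spans.
Variable R : realType.
Implicit Types (p : 'rV[R]_7) (P X : 'M[R]_7) (F : 'rV[R]_7 -> 'rV[R]_7 -> 'M[R]_7).

Lemma in_span2_span3 F P X1 X2 X3 X :
  (forall u v, (u <= P)%MS -> (v <= P)%MS -> span3 X1 X2 X3 (F u v)) ->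
  in_span2 F P X -> span3 X1 X2 X3 X.
Proof.
move=> Fspan [n [c [u [v [uP [vP ->]]]]]].
elim/big_ind: _ => [|_ _ [a1 [a2 [a3 ->]]] [b1 [b2 [b3 ->]]]|i _].
- by exists 0, 0, 0; rewrite comb3_0.
- by rewrite comb3D; do 3 eexists.
- by have [a1 [a2 [a3 ->]]] := Fspan _ _ (uP i) (vP i); rewrite comb3Z; do 3 eexists.
Qed.

Lemma in_span2_comb3 F P u1 v1 u2 v2 u3 v3 c1 c2 c3 :
  (u1 <= P)%MS -> (v1 <= P)%MS -> (u2 <= P)%MS -> (v2 <= P)%MS ->
  (u3 <= P)%MS -> (v3 <= P)%MS ->
  in_span2 F P (comb3 (F u1 v1) (F u2 v2) (F u3 v3) c1 c2 c3).
Proof.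
move=> u1P v1P u2P v2P u3P v3P.
exists 3%N, (fun i => nth 0 [:: c1; c2; c3] i), (fun i => nth 0 [:: u1; u2; u3] i),
  (fun i => nth 0 [:: v1; v2; v3] i).
split; first by case=> [[|[|[|?]]] ?].
split; first by case=> [[|[|[|?]]] ?].
by rewrite !big_ord_recr big_ord0 /= add0r.
Qed.

Lemma wedge_comb3 p1 p2 p3 x1 x2 x3 y1 y2 y3 :
  wedge (comb3 p1 p2 p3 x1 x2 x3) (comb3 p1 p2 p3 y1 y2 y3) =
  comb3 (wedge p2 p3) (wedge p3 p1) (wedge p1 p2)
    (x2 * y3 - x3 * y2) (x3 * y1 - x1 * y3) (x1 * y2 - x2 * y1).
Proof. by apply/matrixP => a b; rewrite !mxE !ip_ev !mxE; ring. Qed.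

End Spans.

Definition g2_frame (R : realType) (p1 p2 p3 : 'rV[R]_7) :=
  [/\ ip p1 p1 = 1, ip p2 p2 = 1, ip p1 p2 = 0 & cross p1 p2 = p3].

Section OrthonormalFrames.
Variable R : realType.
Implicit Types u v : 'rV[R]_7.

Definition normalize u := (Num.sqrt (ip u u))^-1 *: u.

Lemma ip_normalize u : u != 0 -> ip (normalize u) (normalize u) = 1.
Proof.
rewrite -ip_eq0 => uu_neq0; have uu_gt0 : 0 < ip u u by rewrite lt_def uu_neq0 ip_ge0.
by rewrite ipZl ipZr mulrA -expr2 exprVn sqr_sqrtr ?mulVf // ltW.
Qed.

Lemma orthonormal_pair (P : 'M[R]_7) : (1 < \rank P)%N ->
  exists p1 p2, [/\ (p1 <= P)%MS, (p2 <= P)%MS, ip p1 p1 = 1, ip p2 p2 = 1 & ip p1 p2 = 0].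
Proof.
move=> rkP.
have [i Pi_neq0] : exists i, row i P != 0.
  apply/existsP; apply: contraLR rkP; rewrite negb_exists => /forallP P0.
  suff -> : P = 0 by rewrite mxrank0.
  by apply/row_matrixP => i; rewrite row0; apply/eqP/negPn/P0.
set p1 := normalize (row i P).
have p1P : (p1 <= P)%MS := scalemx_sub _ (row_sub i P).
have p1p1 : ip p1 p1 = 1 := ip_normalize Pi_neq0.
clearbody p1.
have [j Pj_notin_p1] : exists j, ~~ (row j P <= p1)%MS.
  apply/existsP; apply: contraLR rkP; rewrite negb_exists -leqNgt => /forallP Pp1.
  have /mxrankS rkPp1 : (P <= p1)%MS by apply/row_subP => j; apply/negPn/Pp1.
  exact: leq_trans rkPp1 (rank_leq_row p1).
set b := row j P - ip (row j P) p1 *: p1.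
have b_neq0 : b != 0.
  by apply: contra Pj_notin_p1; rewrite subr_eq0 => /eqP ->; rewrite scalemx_sub.
have p1b : ip p1 b = 0 by rewrite ipDr ipNr ipZr p1p1 [ip p1 _]ipC mulr1 subrr.
exists p1, (normalize b); split => //.
- by rewrite scalemx_sub // addmx_sub ?row_sub // eqmx_opp scalemx_sub.
- exact: ip_normalize.
- by rewrite ipZr p1b mulr0.
Qed.

Lemma orthonormal_expansion n (P : 'M[R]_7) (p : 'I_n -> 'rV[R]_7) :
  \rank P = n -> (forall i, (p i <= P)%MS) -> (forall i j, ip (p i) (p j) = (i == j)%:R) ->
  forall u, (u <= P)%MS -> u = \sum_i ip u (p i) *: p i.
Proof.
move=> rkP pP p_orth u uP.
have ip_sum (c : 'I_n -> R) j : ip (\sum_i c i *: p i) (p j) = c j.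
  rewrite (big_morph (fun x => ip x (p j)) (fun x y => ipDl x y (p j)) (ip0l (p j))).
  rewrite (bigD1 j) //= big1 => [|i /negPf i_neq_j]; last by rewrite ipZl p_orth i_neq_j mulr0.
  by rewrite ipZl p_orth eqxx mulr1 addr0.
pose S := \matrix_(i < n, k < 7) p i 0 k.
have rowS i : row i S = p i by apply/rowP => k; rewrite !mxE.
have SP : (S <= P)%MS by apply/row_subP => i; rewrite rowS.
have rkS : \rank S = n.
  have SST : S *m S^T = 1%:M.
    by apply/matrixP => i j; rewrite !mxE -p_orth; apply: eq_bigr => k _; rewrite !mxE.
  by apply/eqP; rewrite eqn_leq rank_leq_row -{1}(mxrank1 R n) -SST mxrankM_maxl.
have PS : (P <= S)%MS by rewrite -(mxrank_leqif_sup SP).2 rkP rkS.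
have [D uDS] := submxP (submx_trans uP PS).
have u_sum : u = \sum_i D 0 i *: p i.
  by rewrite uDS mulmx_sum_row; apply: eq_bigr => i _; rewrite rowS.
by rewrite [in LHS]u_sum; apply: eq_bigr => i _; rewrite [in RHS]u_sum ip_sum.
Qed.

Lemma associative_frame P : associative_plane P ->
  exists p1 p2 p3, g2_frame p1 p2 p3 /\
  [/\ (p1 <= P)%MS, (p2 <= P)%MS, (p3 <= P)%MS &
      forall u, (u <= P)%MS -> u = comb3 p1 p2 p3 (ip u p1) (ip u p2) (ip u p3)].
Proof.
case=> rkP crossP.
have rkP_gt1 : (1 < \rank P)%N by rewrite rkP.
have [p1 [p2 [p1P p2P p1p1 p2p2 p1p2]]] := orthonormal_pair rkP_gt1.
have [p3p3 p1p3 p2p3] := cross_orthonormal p1p1 p2p2 p1p2.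
exists p1, p2, (cross p1 p2); split=> //; split=> [||| u uP]; rewrite ?crossP //.
pose p (i : 'I_3) := nth 0 [:: p1; p2; cross p1 p2] i.
have pP i : (p i <= P)%MS by case: i => [[|[|[|?]]] ?] //=; rewrite crossP.
have p_orth i j : ip (p i) (p j) = (i == j)%:R.
  by case: i => [[|[|[|?]]] ?]; case: j => [[|[|[|?]]] ?] //=; rewrite ipC.
by rewrite [in LHS](orthonormal_expansion rkP pP p_orth uP) !big_ord_recr big_ord0 /p /= add0r.
Qed.

End OrthonormalFrames.

Section Frame.
Variable R : realType.
Variables (p1 p2 p3 : 'rV[R]_7) (P : 'M[R]_7).
Hypothesis frame_p : g2_frame p1 p2 p3.
Hypotheses (p1P : (p1 <= P)%MS) (p2P : (p2 <= P)%MS) (p3P : (p3 <= P)%MS)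
  (P_frame : forall u, (u <= P)%MS -> u = comb3 p1 p2 p3 (ip u p1) (ip u p2) (ip u p3)).

Let p1p1 : ip p1 p1 = 1. Proof. by case: frame_p. Qed.
Let p2p2 : ip p2 p2 = 1. Proof. by case: frame_p. Qed.
Let p1p2 : ip p1 p2 = 0. Proof. by case: frame_p. Qed.
Let p1xp2 : cross p1 p2 = p3. Proof. by case: frame_p. Qed.
Let p3p3 : ip p3 p3 = 1. Proof. by have [] := cross_orthonormal p1p1 p2p2 p1p2; rewrite p1xp2. Qed.
Let p1p3 : ip p1 p3 = 0. Proof. by have [] := cross_orthonormal p1p1 p2p2 p1p2; rewrite p1xp2. Qed.
Let p2p3 : ip p2 p3 = 0. Proof. by have [] := cross_orthonormal p1p1 p2p2 p1p2; rewrite p1xp2. Qed.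
Let p2p1 : ip p2 p1 = 0. Proof. by rewrite ipC. Qed.
Let p3p1 : ip p3 p1 = 0. Proof. by rewrite ipC. Qed.
Let p3p2 : ip p3 p2 = 0. Proof. by rewrite ipC. Qed.
Let p2xp3 : cross p2 p3 = p1.
Proof.
by rewrite -p1xp2 -[cross p1 p2]opprK -crossC crossNr cross_cross p2p1 p2p2
  scale0r scale1r sub0r opprK.
Qed.
Let p3xp1 : cross p3 p1 = p2.
Proof.
by rewrite -p1xp2 crossC cross_cross p1p2 p1p1 scale0r scale1r sub0r opprK.
Qed.
Let p2xp1 : cross p2 p1 = - p3. Proof. by rewrite crossC p1xp2. Qed.
Let p3xp2 : cross p3 p2 = - p1. Proof. by rewrite crossC p2xp3. Qed.
Let p1xp3 : cross p1 p3 = - p2. Proof. by rewrite crossC p3xp1. Qed.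

Local Notation W1 := (wedge p2 p3).
Local Notation W2 := (wedge p3 p1).
Local Notation W3 := (wedge p1 p2).
Local Notation Q1 := (Phi p1 - W1).
Local Notation Q2 := (Phi p2 - W2).
Local Notation Q3 := (Phi p3 - W3).

Ltac frame_tables := rewrite ?crossvv ?p1xp2 ?p2xp3 ?p3xp1 ?p2xp1 ?p3xp2 ?p1xp3
  ?ip0l ?ip0r ?ipNl ?ipNr ?p1p1 ?p2p2 ?p3p3 ?p1p2 ?p1p3 ?p2p3 ?p2p1 ?p3p1 ?p3p2.

Ltac bracket_tables := rewrite ?lie2Bl ?lie2Br ?lie2_Phi_Phi ?lie2_wedge_Phi
  ?[lie2 (Phi _) (wedge _ _)]lie2C ?lie2_wedge_Phi ?lie2_wedge_wedge; frame_tables;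
  rewrite ?PhiN ?Phi0; apply/matrixP => a b; rewrite !mxE ?ip0l ?ipNl; ring.

Lemma lie2_W a1 a2 a3 c1 c2 c3 :
  lie2 (comb3 W1 W2 W3 a1 a2 a3) (comb3 W1 W2 W3 c1 c2 c3) =
  comb3 W1 W2 W3 (a2 * c3 - a3 * c2) (a3 * c1 - a1 * c3) (a1 * c2 - a2 * c1).
Proof.
by apply: (bracket_comb3 (@lie2Dl R) (@lie2Zl R) (@lie2C R) (@lie2xx R)); bracket_tables.
Qed.

Lemma lie2_Q b1 b2 b3 d1 d2 d3 :
  lie2 (comb3 Q1 Q2 Q3 b1 b2 b3) (comb3 Q1 Q2 Q3 d1 d2 d3) =
  comb3 Q1 Q2 Q3 (-2 * (b2 * d3 - b3 * d2)) (-2 * (b3 * d1 - b1 * d3))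
    (-2 * (b1 * d2 - b2 * d1)).
Proof.
rewrite (bracket_comb3 (y1 := -2 *: Q1) (y2 := -2 *: Q2) (y3 := -2 *: Q3)
  (@lie2Dl R) (@lie2Zl R) (@lie2C R) (@lie2xx R)).
- by rewrite /comb3 !scalerA ![_ * -2]mulrC.
all: bracket_tables.
Qed.

Lemma lie2_W_Q a1 a2 a3 b1 b2 b3 :
  lie2 (comb3 W1 W2 W3 a1 a2 a3) (comb3 Q1 Q2 Q3 b1 b2 b3) = 0.
Proof.
have W_Q X Y : X \in [:: W1; W2; W3] -> Y \in [:: Q1; Q2; Q3] -> lie2 X Y = 0.
  by rewrite !inE => /or3P[]/eqP-> /or3P[]/eqP->; bracket_tables.
rewrite /comb3 !lie2Dl !lie2Dr !lie2Zl !lie2Zr.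
by rewrite !W_Q ?inE ?eqxx ?orbT // !scaler0 !addr0.
Qed.

Definition theta_of a1 a2 a3 b1 b2 b3 : 'M[R]_7 :=
  comb3 W1 W2 W3 a1 a2 a3 + comb3 Q1 Q2 Q3 b1 b2 b3.

Lemma lie2_theta_of a1 a2 a3 b1 b2 b3 c1 c2 c3 d1 d2 d3 :
  lie2 (theta_of a1 a2 a3 b1 b2 b3) (theta_of c1 c2 c3 d1 d2 d3) =
  theta_of (a2 * c3 - a3 * c2) (a3 * c1 - a1 * c3) (a1 * c2 - a2 * c1)
     (-2 * (b2 * d3 - b3 * d2)) (-2 * (b3 * d1 - b1 * d3)) (-2 * (b1 * d2 - b2 * d1)).
Proof.
rewrite /theta_of lie2Dl !(lie2Dr (comb3 W1 W2 W3 c1 c2 c3)) lie2_W lie2_Q lie2_W_Q.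
by rewrite [lie2 (comb3 Q1 _ _ _ _ _) _]lie2C lie2_W_Q oppr0 addr0 add0r.
Qed.

(* The W_i and Q_i are orthogonal, of squared norms 2 and 4 for ip2. *)
Definition theta_coords X : 'M[R]_4 :=
  so4_of (ip2 X W1 / 2) (ip2 X W2 / 2) (ip2 X W3 / 2)
         (ip2 X Q1 / 4) (ip2 X Q2 / 4) (ip2 X Q3 / 4).

Lemma theta_coordsD a X Y : theta_coords (a *: X + Y) = a *: theta_coords X + theta_coords Y.
Proof.
rewrite /theta_coords /so4_of /comb3 !ip2Dl !ip2Zl.
by apply/matrixP => i j; rewrite !mxE; ring.
Qed.

Ltac gram_tables := do 2 rewrite ?ip2Dl ?ip2Dr ?ip2Zl ?ip2Zr ?ip2Nl ?ip2Nr;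
  rewrite ?ip2_wedge_wedge ?ip2_wedge_Phi ?[ip2 (Phi _) (wedge _ _)]ip2C ?ip2_wedge_Phi
    ?ip2_Phi_Phi ?phi_ip; frame_tables.

Lemma theta_coords_of a1 a2 a3 b1 b2 b3 :
  theta_coords (theta_of a1 a2 a3 b1 b2 b3) = so4_of a1 a2 a3 b1 b2 b3.
Proof. by rewrite /theta_coords /theta_of /comb3; congr so4_of; gram_tables; field. Qed.

Lemma ip2_W_Q a1 a2 a3 b1 b2 b3 :
  ip2 (comb3 W1 W2 W3 a1 a2 a3) (comb3 Q1 Q2 Q3 b1 b2 b3) = 0.
Proof. by rewrite /comb3; gram_tables; ring. Qed.

Lemma cross_comb3 x1 x2 x3 y1 y2 y3 :
  cross (comb3 p1 p2 p3 x1 x2 x3) (comb3 p1 p2 p3 y1 y2 y3) =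
  comb3 p1 p2 p3 (x2 * y3 - x3 * y2) (x3 * y1 - x1 * y3) (x1 * y2 - x2 * y1).
Proof. exact: (bracket_comb3 (@crossDl R) (@crossZl R) (@crossC R) (@crossvv R)). Qed.

Lemma PsiF_comb3 x1 x2 x3 y1 y2 y3 :
  PsiF (comb3 p1 p2 p3 x1 x2 x3) (comb3 p1 p2 p3 y1 y2 y3) =
  - comb3 Q1 Q2 Q3 (x2 * y3 - x3 * y2) (x3 * y1 - x1 * y3) (x1 * y2 - x2 * y1).
Proof.
rewrite PsiF_wedge_Phi wedge_comb3 cross_comb3 /comb3 !PhiD !PhiZ.
by apply/matrixP => a b; rewrite !mxE; ring.
Qed.

Lemma Lambda2_span3 X : Lambda2 P X <-> span3 W1 W2 W3 X.
Proof.
split=> [|[a1 [a2 [a3 ->]]]]; last exact: in_span2_comb3.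
apply: in_span2_span3 => u v /P_frame -> /P_frame ->.
by rewrite wedge_comb3; do 3 eexists.
Qed.

Lemma PsiSp_span3 X : PsiSp P X <-> span3 Q1 Q2 Q3 X.
Proof.
split=> [|[b1 [b2 [b3 ->]]]].
  apply: in_span2_span3 => u v /P_frame -> /P_frame ->.
  by rewrite PsiF_comb3 -scaleN1r comb3Z; do 3 eexists.
have PsiF_Q (u v w : 'rV[R]_7) : cross u v = w -> PsiF u v = - (Phi w - wedge u v).
  by move=> uxv; rewrite PsiF_wedge_Phi uxv opprB.
have -> : comb3 Q1 Q2 Q3 b1 b2 b3 =
    comb3 (PsiF p2 p3) (PsiF p3 p1) (PsiF p1 p2) (- b1) (- b2) (- b3).
  rewrite (PsiF_Q _ _ _ p2xp3) (PsiF_Q _ _ _ p3xp1) (PsiF_Q _ _ _ p1xp2).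
  by rewrite /comb3 !scaleNr !scalerN !opprK.
exact: in_span2_comb3.
Qed.

Lemma Theta_theta_of X :
  Theta P X <-> exists a1 a2 a3 b1 b2 b3, X = theta_of a1 a2 a3 b1 b2 b3.
Proof.
split=> [[A [B [/Lambda2_span3 [a1 [a2 [a3 ->]]] [/PsiSp_span3 [b1 [b2 [b3 ->]]] ->]]]]|].
  by exists a1, a2, a3, b1, b2, b3.
move=> [a1 [a2 [a3 [b1 [b2 [b3 ->]]]]]].
exists (comb3 W1 W2 W3 a1 a2 a3), (comb3 Q1 Q2 Q3 b1 b2 b3).
split; first by apply/Lambda2_span3; exists a1, a2, a3.
by split; first by apply/PsiSp_span3; exists b1, b2, b3.
Qed.

Lemma Theta_so4_iso :
  (forall X Y, Lambda2 P X -> PsiSp P Y -> ip2 X Y = 0) /\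
  (forall X Y, Theta P X -> Theta P Y -> Theta P (lie2 X Y)) /\
  (exists f : 'M[R]_7 -> 'M[R]_4,
     (forall (a : R) X Y, Theta P X -> Theta P Y ->
        f (a *: X + Y) = a *: f X + f Y) /\
     (forall X, Theta P X -> so4 (f X)) /\
     (forall X Y, Theta P X -> Theta P Y -> f X = f Y -> X = Y) /\
     (forall A, so4 A -> exists2 X, Theta P X & f X = A) /\
     (forall X Y, Theta P X -> Theta P Y -> f (lie2 X Y) = lie4 (f X) (f Y))).
Proof.
split.
  move=> X Y /Lambda2_span3 [a1 [a2 [a3 ->]]] /PsiSp_span3 [b1 [b2 [b3 ->]]].
  exact: ip2_W_Q.
split.
  move=> X Y /Theta_theta_of [a1 [a2 [a3 [b1 [b2 [b3 ->]]]]]].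
  move=> /Theta_theta_of [c1 [c2 [c3 [d1 [d2 [d3 ->]]]]]].
  by apply/Theta_theta_of; rewrite lie2_theta_of; do 6 eexists.
exists theta_coords; split; first by move=> a X Y _ _; exact: theta_coordsD.
split.
  move=> X /Theta_theta_of [a1 [a2 [a3 [b1 [b2 [b3 ->]]]]]].
  by rewrite theta_coords_of; exact: so4_of_skew.
split.
  move=> X Y /Theta_theta_of [a1 [a2 [a3 [b1 [b2 [b3 ->]]]]]].
  move=> /Theta_theta_of [c1 [c2 [c3 [d1 [d2 [d3 ->]]]]]].
  by rewrite !theta_coords_of => /so4_of_inj [-> -> -> -> -> ->].
split.
  move=> A /so4_of_surj [a1 [a2 [a3 [b1 [b2 [b3 ->]]]]]].
  exists (theta_of a1 a2 a3 b1 b2 b3); last exact: theta_coords_of.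
  by apply/Theta_theta_of; do 6 eexists.
move=> X Y /Theta_theta_of [a1 [a2 [a3 [b1 [b2 [b3 ->]]]]]].
move=> /Theta_theta_of [c1 [c2 [c3 [d1 [d2 [d3 ->]]]]]].
by rewrite lie2_theta_of !theta_coords_of lie4_so4_of.
Qed.

End Frame.

Theorem proposition4p8 (R : realType) (P : 'M[R]_7) :
  associative_plane P ->
  (* the sum is orthogonal (hence direct) *)
  (forall X Y, Lambda2 P X -> PsiSp P Y -> ip2 X Y = 0) /\
  (* Theta(P) is a Lie subalgebra of Lambda^2(R^7) = so(7) *)
  (forall X Y, Theta P X -> Theta P Y -> Theta P (lie2 X Y)) /\
  (* Theta(P) is isomorphic to so(4) as a Lie algebra *)
  (exists f : 'M[R]_7 -> 'M[R]_4,
     (forall (a : R) X Y, Theta P X -> Theta P Y ->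
        f (a *: X + Y) = a *: f X + f Y) /\
     (forall X, Theta P X -> so4 (f X)) /\
     (forall X Y, Theta P X -> Theta P Y -> f X = f Y -> X = Y) /\
     (forall A, so4 A -> exists2 X, Theta P X & f X = A) /\
     (forall X Y, Theta P X -> Theta P Y -> f (lie2 X Y) = lie4 (f X) (f Y))).
Proof.
move=> /associative_frame [p1 [p2 [p3 [frame_p [p1P p2P p3P P_frame]]]]].
exact: Theta_so4_iso frame_p p1P p2P p3P P_frame.
Qed.
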